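(* Let $\mathcal P$ be a convex family of probability measures on a measurable space $(\Omega,\mathcal F)$ and let $x'\in\mathrm{ca}(\mathcal P)'$. Suppose there exists an $\mathcal F$-measurable function $h$ with $x'(\mu)=\int h\,d\mu$ for all $\mu\in\mathrm{ca}(\mathcal P)$. Then $h$ is unique up to $\mathcal P$-q.s. equality and $h\in\mathbb L^\infty(\mathcal P)$.
   Context: $\mathrm{ca}(\mathcal P)$ is the normed space of finite signed measures $\mu$ on $\mathcal F$ with $|\mu|\ll P$ for some $P\in\mathcal P$, with the total variation norm; $\mathrm{ca}(\mathcal P)'$ is its dual. A set is $\mathcal P$-polar if contained in some $N\in\mathcal F$ with $P(N)=0$ for all $P\in\mathcal P$; $\mathcal P$-q.s. means outside a polar set. $\mathbb L^\infty(\mathcal P)$ is the space of measurable functions bounded $\mathcal P$-q.s., modulo $\mathcal P$-q.s. equality. *)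

From HB Require Import structures.
From mathcomp Require Import all_boot all_order all_algebra.
From mathcomp Require Import all_classical all_reals all_analysis.
Set Implicit Arguments. Unset Strict Implicit. Unset Printing Implicit Defensive.
Import Order.TTheory GRing.Theory Num.Theory.
Import numFieldNormedType.Exports.
Local Open Scope classical_set_scope.
Local Open Scope ring_scope.

Section signed.
Context d (T : measurableType d) (R : realType).
Variable nu : {charge set T -> \bar R}.

Definition hahnP : set T := projT1 (cid (Hahn_decomposition nu)).
Definition hahnN : set T := projT1 (cid (projT2 (cid (Hahn_decomposition nu)))).
Definition hahnPN : hahn_decomposition nu hahnP hahnN :=
  projT2 (cid (projT2 (cid (Hahn_decomposition nu)))).

Definition tvar := charge_variation hahnPN.
Definition tv_norm : R := fine (tvar setT).

Definition sintegrable (h : T -> R) : Prop :=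
  (tvar).-integrable setT (EFin \o h).

Definition sintegral (h : T -> R) : \bar R :=
  (\int[jordan_pos hahnPN]_x (h x)%:E - \int[jordan_neg hahnPN]_x (h x)%:E)%E.
End signed.

Section caP.
Context d (T : measurableType d) (R : realType).
Variable PP : set (probability T R).

Definition convex_family : Prop :=
  forall (P Q : probability T R) (t : R), PP P -> PP Q -> 0 <= t <= 1 ->
  forall M : probability T R,
    (forall A, measurable A -> M A = (t%:E * P A + (1 - t)%:E * Q A)%E) -> PP M.

(* ca(P): finite signed measures with |mu| << P for some P in PP *)
Definition caP (mu : {charge set T -> \bar R}) : Prop :=
  exists2 P : probability T R, PP P & charge_dominates P (hahnPN mu).

Definition polar (N : set T) : Prop :=
  measurable N /\ forall P : probability T R, PP P -> P N = 0%E.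

(* x' in ca(P)' : linear and continuous (w.r.t. the total variation norm) on ca(P) *)
Definition ca_linear (x : {charge set T -> \bar R} -> R) : Prop :=
  forall (a : R) (mu nu rho : {charge set T -> \bar R}), caP mu -> caP nu -> caP rho ->
    (forall A, measurable A -> rho A = (a%:E * mu A + nu A)%E) ->
    x rho = a * x mu + x nu.

Definition ca_continuous (x : {charge set T -> \bar R} -> R) : Prop :=
  forall mu : {charge set T -> \bar R}, caP mu ->
  forall eps : R, 0 < eps -> exists2 delta : R, 0 < delta &
  forall nu : {charge set T -> \bar R}, caP nu ->
    tv_norm (cadd nu (cscale (-1) mu)) < delta -> `|x nu - x mu| < eps.

Definition ca_dual (x : {charge set T -> \bar R} -> R) : Prop :=
  ca_linear x /\ ca_continuous x.

Definition represents (x : {charge set T -> \bar R} -> R) (h : T -> R) : Prop :=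
  forall mu : {charge set T -> \bar R}, caP mu ->
    sintegrable mu h /\ (x mu)%:E = sintegral mu h.
End caP.

From Pilot Require Import Defs.
From HB Require Import structures.
From mathcomp Require Import all_boot all_order all_algebra.
From mathcomp Require Import all_classical all_reals all_analysis.
From mathcomp Require Import measurable_realfun ring lra.
Set Implicit Arguments. Unset Strict Implicit. Unset Printing Implicit Defensive.
Import Order.TTheory GRing.Theory Num.Theory.
Local Open Scope classical_set_scope.
Local Open Scope ring_scope.

(* Testing x' against the restrictions P(. `&` B), P in PP, gives
   x'(P(. `&` B)) = \int_B h dP for every measurable B.  Two representing
   densities therefore have the same integrals over all sets, hence agree
   P-a.s. for every P in PP.  Continuity of x' at 0 yields a delta with
   |x'(mu)| < 1 whenever ||mu|| < delta; taking mu = c P(. `&` B) with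
   c P(B) = delta/2 and using linearity gives |\int_B h dP| <= (2/delta) P(B)
   for all B, so |h| <= 2/delta P-a.s. for every P in PP. *)

Section measurable_level_sets.
Context d (T : measurableType d) (R : realType).

Lemma measurable_ltr (f g : T -> R) : measurable_fun setT f -> measurable_fun setT g ->
  measurable [set w | f w < g w].
Proof. by move=> mf mg; rewrite -[X in measurable X]setTI; exact: measurable_fun_ltr. Qed.

Lemma measurable_neqr (f g : T -> R) : measurable_fun setT f -> measurable_fun setT g ->
  measurable [set w | f w != g w].
Proof.
move=> mf mg.
rewrite (_ : [set w | f w != g w] = [set w | f w < g w] `|` [set w | g w < f w]).
  by apply: measurableU; exact: measurable_ltr.
by apply/seteqP; split=> w /=; rewrite neq_lt => /orP.
Qed.

End measurable_level_sets.

Section integral_null_sets.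
Context d (T : measurableType d) (R : realType).
Local Open Scope ereal_scope.

Lemma fin_num_integral_integrable (mu : {measure set T -> \bar R}) (D : set T)
    (f : T -> \bar R) :
  measurable D -> measurable_fun D f ->
  \int[mu]_(w in D) f w \is a fin_num -> mu.-integrable D f.
Proof.
move=> mD mf; rewrite integralE fin_numB => /andP[fin_pos fin_neg].
apply/integrableP; split=> //.
rewrite (_ : (fun w => `|f w|) = abse \o f)// fune_abse ge0_integralD//.
- by rewrite lte_add_pinfty// ltey_eq ?fin_pos ?fin_neg.
- exact: measurable_funepos.
- exact: measurable_funeneg.
Qed.

Lemma gt0_integral_le0_measure0 (mu : {measure set T -> \bar R}) (A : set T)
    (g : T -> \bar R) :
  measurable A -> measurable_fun A g -> (forall w, A w -> 0 < g w) ->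
  \int[mu]_(w in A) g w <= 0 -> mu A = 0.
Proof.
move=> mA mg g_gt0 int_le0.
have int_abs0 : \int[mu]_(w in A) `|g w| = 0.
  rewrite (eq_integral g); last by move=> w /[!inE] Aw; rewrite gee0_abs ?ltW ?g_gt0.
  by apply/eqP; rewrite eq_le int_le0 integral_ge0// => w Aw; rewrite ltW ?g_gt0.
have g_ae0 := (ae_eq_integral_abs mu mA mg).1 int_abs0.
apply/(negligibleP mu mA)/(negligibleS _ g_ae0) => w Aw /(_ Aw) gw0.
by have := g_gt0 w Aw; rewrite gw0 ltxx.
Qed.

Variable mu : {finite_measure set T -> \bar R}.

Lemma integral_le_measure_gt_eq0 (f : T -> R) (K : R) :
  measurable_fun setT f -> mu.-integrable setT (EFin \o f) ->
  (forall B, measurable B -> \int[mu]_(w in B) (f w)%:E <= K%:E * mu B) ->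
  mu [set w | (K < f w)%R] = 0.
Proof.
move=> mf intf int_le; set A := [set w | (K < f w)%R].
have mA : measurable A by exact: measurable_ltr.
apply: (@gt0_integral_le0_measure0 _ _ (fun w => (f w)%:E - K%:E)) => //.
- apply: emeasurable_funB; last exact: measurable_cst.
  by apply/measurable_EFinP; exact: measurable_funS mf.
- by move=> w Aw; rewrite sube_gt0 lte_fin.
rewrite integralB_EFin//; last exact: finite_measure_integrable_cst.
  by rewrite integral_cst// sube_le0 int_le.
exact: integrableS intf.
Qed.

Lemma integral_abs_le_measure_gt_eq0 (f : T -> R) (K : R) :
  measurable_fun setT f -> mu.-integrable setT (EFin \o f) ->
  (forall B, measurable B -> `|\int[mu]_(w in B) (f w)%:E| <= K%:E * mu B) ->
  mu [set w | (K < `|f w|)%R] = 0.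
Proof.
move=> mf intf int_le.
have mNf : measurable_fun setT (fun w => - f w)%R by exact: measurableT_comp.
have intNf : mu.-integrable setT (EFin \o (fun w => - f w)%R).
  by rewrite (_ : _ \o _ = -%E \o (EFin \o f)); [exact: integrableN|apply/funext].
have tail_pos : mu [set w | (K < f w)%R] = 0.
  apply: integral_le_measure_gt_eq0 => // B mB.
  exact: le_trans (lee_abs _) (int_le B mB).
have tail_neg : mu [set w | (K < - f w)%R] = 0.
  apply: integral_le_measure_gt_eq0 => // B mB.
  under eq_integral do rewrite EFinN.
  rewrite integralN; first by rewrite (le_trans _ (int_le B mB))// -abseN lee_abs.
  have intBf := integrableS measurableT mB (subsetT B) intf.
  by apply: fin_num_adde_defl; rewrite fin_numN; exact: integrable_neg_fin_num intBf.
apply/(negligibleP mu).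
  by apply: measurable_ltr => //; exact: measurableT_comp.
apply: (negligibleS (A := [set w | (K < f w)%R] `|` [set w | (K < - f w)%R])).
  by move=> w /=; rewrite ltr_normr => /orP[]; [left|right].
apply: negligibleU; apply/negligibleP => //; exact: measurable_ltr.
Qed.

Lemma integral_eq_measure_neq_eq0 (f g : T -> R) :
  measurable_fun setT f -> measurable_fun setT g ->
  mu.-integrable setT (EFin \o f) -> mu.-integrable setT (EFin \o g) ->
  (forall B, measurable B ->
    \int[mu]_(w in B) (f w)%:E = \int[mu]_(w in B) (g w)%:E) ->
  mu [set w | f w != g w] = 0.
Proof.
move=> mf mg intf intg int_eq.
rewrite -[RHS](@integral_abs_le_measure_gt_eq0 (fun w => f w - g w)%R 0).
- by congr (mu _); apply/seteqP; split=> w; rewrite /= normr_gt0 subr_eq0.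
- exact: measurable_funB.
- by rewrite (_ : _ \o _ = (EFin \o f) \- (EFin \o g)); [exact: integrableB|apply/funext].
move=> B mB; rewrite mul0e.
have intBf := integrableS measurableT mB (subsetT B) intf.
have intBg := integrableS measurableT mB (subsetT B) intg.
under eq_integral do rewrite EFinB.
by rewrite integralB_EFin// int_eq// subee ?abse0// integrable_fin_num.
Qed.

End integral_null_sets.

Section ge0_charge.
Context d (T : measurableType d) (R : realType).
Local Open Scope ereal_scope.
Variable rho : {charge set T -> \bar R}.
Hypothesis rho_ge0 : forall A, measurable A -> 0 <= rho A.

Lemma ge0_jordan_neg A : measurable A -> jordan_neg (hahnPN rho) A = 0.
Proof.
move=> mA; rewrite jordan_negE cjordan_negE /crestr0 mem_set// /crestr.
have [_ [mN N_le0] _ _] := hahnPN rho.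
apply/eqP; rewrite oppe_eq0 eq_le rho_ge0 ?andbT; last exact: measurableI.
by apply: N_le0; [exact: measurableI|exact: subIsetr].
Qed.

Lemma ge0_jordan_pos A : measurable A -> jordan_pos (hahnPN rho) A = rho A.
Proof.
move=> mA; rewrite (jordan_decomp (hahnPN rho) mA) /cadd /cscale.
(* the summand is [jordan_neg] seen as a charge; fold it to the measure form *)
by rewrite -[X in _ + _ * X]/(jordan_neg (hahnPN rho) A) ge0_jordan_neg// mule0 adde0.
Qed.

Lemma ge0_tvar A : measurable A -> tvar rho A = rho A.
Proof.
move=> mA; rewrite /tvar /= -[RHS]adde0.
by congr (_ + _); [exact: ge0_jordan_pos|exact: ge0_jordan_neg].
Qed.

Lemma ge0_tv_norm : tv_norm rho = fine (rho setT).
Proof. by rewrite /tv_norm ge0_tvar. Qed.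

(* Plain [sintegral] would denote MathComp's integral of simple functions. *)
Lemma ge0_sintegral g :
  Defs.sintegral rho g = \int[jordan_pos (hahnPN rho)]_w (g w)%:E.
Proof.
rewrite /Defs.sintegral (_ : \int[jordan_neg _]_w _ = 0) ?sube0//.
rewrite (eq_measure_integral mzero) ?integral_measure_zero//.
by move=> A mA _; exact: ge0_jordan_neg.
Qed.

Lemma ge0_caP (PP : set (probability T R)) (P : probability T R) : PP P ->
  (forall A, measurable A -> P A = 0 -> rho A = 0) -> caP PP rho.
Proof.
move=> PP_P P_dom; exists P => // A mA PA0.
by rewrite -[LHS]/(tvar rho A) ge0_tvar// P_dom.
Qed.

End ge0_charge.

Lemma ge0_tv_norm_sub_czero d (T : measurableType d) (R : realType)
    (rho : {charge set T -> \bar R}) :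
  (forall A, measurable A -> 0 <= rho A)%E ->
  tv_norm (cadd rho (cscale (-1) czero)) = fine (rho setT).
Proof.
move=> rho_ge0.
have rho_czero A : cadd rho (cscale (-1) czero) A = rho A.
  by rewrite /cadd -[X in (_ + X)%E]/((-1)%:E * 0)%E mule0 adde0.
rewrite ge0_tv_norm => [|A mA]; first by congr fine; exact: rho_czero.
by have /= -> := rho_czero A; exact: rho_ge0.
Qed.

Section restr_charge.
Context d (T : measurableType d) (R : realType).
Local Open Scope ereal_scope.
Variables (P : {finite_measure set T -> \bar R}) (B : set T) (mB : measurable B).

Definition restr_charge : {charge set T -> \bar R} :=
  crestr0 (charge_of_finite_measure P) mB.

Lemma restr_chargeE A : measurable A -> restr_charge A = P (A `&` B).
Proof.
move=> mA; change ((if A \in measurable then P (A `&` B) else 0) = P (A `&` B)).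
by rewrite mem_set.
Qed.

Lemma restr_charge_ge0 A : measurable A -> 0 <= restr_charge A.
Proof. by move=> mA; rewrite restr_chargeE// measure_ge0. Qed.

Lemma integral_jordan_pos_restr_charge (f : T -> \bar R) :
  measurable_fun setT f -> (forall w, 0 <= f w) ->
  \int[jordan_pos (hahnPN restr_charge)]_w f w = \int[P]_(w in B) f w.
Proof.
move=> mf f_ge0.
have jpE A : measurable A -> jordan_pos (hahnPN restr_charge) A = P (A `&` B).
  by move=> mA; rewrite -restr_chargeE//; exact: ge0_jordan_pos restr_charge_ge0 _ mA.
rewrite (@ge0_negligible_integral _ _ _ _ _ (~` B)) ?setTD ?setCK//; last 2 first.
- exact: measurableC.
- by apply: eq_trans (jpE _ (measurableC mB)) _; rewrite setICl measure0.
apply: eq_measure_integral => A mA AB.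
by apply: eq_trans (jpE _ mA) _; rewrite setIidl.
Qed.

Lemma sintegral_restr_charge (g : T -> R) : measurable_fun setT g ->
  Defs.sintegral restr_charge g = \int[P]_(w in B) (g w)%:E.
Proof.
move=> mg; have mEg : measurable_fun setT (EFin \o g) by exact/measurable_EFinP.
rewrite ge0_sintegral; last exact: restr_charge_ge0.
rewrite integralE !integral_jordan_pos_restr_charge -?integralE//.
- exact: measurable_funeneg.
- exact: measurable_funepos.
Qed.

Lemma cscale_restr_charge_ge0 c A : (0 <= c)%R -> measurable A ->
  0 <= cscale c restr_charge A.
Proof. by move=> c_ge0 mA; rewrite /cscale mule_ge0// restr_charge_ge0. Qed.

Lemma tv_norm_cscale_restr_charge c : (0 <= c)%R ->
  tv_norm (cadd (cscale c restr_charge) (cscale (-1) czero)) = (c * fine (P B))%R.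
Proof.
move=> c_ge0; rewrite ge0_tv_norm_sub_czero => [|A mA]; last exact: cscale_restr_charge_ge0.
by rewrite /= /cscale restr_chargeE// setTI fineM// fin_num_measure.
Qed.

End restr_charge.

Section ca_representation.
Context d (T : measurableType d) (R : realType).
Local Open Scope ereal_scope.
Variables (PP : set (probability T R)) (x : {charge set T -> \bar R} -> R).

Lemma caP_czero (P : probability T R) : PP P -> caP PP czero.
Proof. by move=> PP_P; apply: (ge0_caP (rho := czero) _ PP_P). Qed.

Lemma caP_cscale_restr_charge (P : probability T R) B (mB : measurable B) c :
  PP P -> (0 <= c)%R -> caP PP (cscale c (restr_charge P mB)).
Proof.
move=> PP_P c_ge0; apply: (ge0_caP _ PP_P) => [A mA|A mA PA0].
  exact: cscale_restr_charge_ge0.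
rewrite /= /cscale restr_chargeE// (subset_measure0 _ mA _ PA0) ?mule0//.
exact: measurableI.
Qed.

Lemma caP_restr_charge (P : probability T R) B (mB : measurable B) :
  PP P -> caP PP (restr_charge P mB).
Proof.
move=> PP_P; apply: (ge0_caP _ PP_P) => [A mA|A mA PA0]; first exact: restr_charge_ge0.
rewrite restr_chargeE// (subset_measure0 _ mA _ PA0)//.
exact: measurableI.
Qed.

Hypothesis x_linear : ca_linear PP x.

Lemma ca_linear_czero : caP PP czero -> x czero = 0%R.
Proof.
move=> cz; have czeroE (A : set T) : measurable A -> czero A = 1%:E * czero A + czero A :> \bar R.
  by rewrite /czero mule0 adde0.
have := @x_linear 1%R _ _ _ cz cz cz czeroE.
by rewrite mul1r; lra.
Qed.

Lemma ca_linear_cscale (mu : {charge set T -> \bar R}) c :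
  caP PP czero -> caP PP mu -> caP PP (cscale c mu) -> x (cscale c mu) = (c * x mu)%R.
Proof.
move=> cz muP cmuP; rewrite (@x_linear c _ _ _ muP cz cmuP) ?ca_linear_czero ?addr0// => A mA.
by rewrite /cscale /= adde0.
Qed.

Variable h : T -> R.
Hypotheses (mh : measurable_fun setT h) (x_h : represents PP x h).

Lemma represents_restr_charge (P : probability T R) B (mB : measurable B) :
  PP P -> (x (restr_charge P mB))%:E = \int[P]_(w in B) (h w)%:E.
Proof.
move=> PP_P; have [_ ->] := x_h (caP_restr_charge mB PP_P).
exact: sintegral_restr_charge.
Qed.

Lemma represents_integrable (P : probability T R) :
  PP P -> P.-integrable setT (EFin \o h).
Proof.
move=> PP_P; apply: fin_num_integral_integrable => //; first exact/measurable_EFinP.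
by rewrite -(represents_restr_charge measurableT PP_P).
Qed.

Hypothesis x_continuous : ca_continuous PP x.

Lemma represents_integral_abs_le : caP PP czero ->
  exists K : R, forall (P : probability T R) B, PP P -> measurable B ->
    `|\int[P]_(w in B) (h w)%:E| <= K%:E * P B.
Proof.
move=> cz; have x0 := ca_linear_czero cz.
have [delta delta_gt0 x_near0] := x_continuous cz ltr01.
exists (2 / delta)%R => P B PP_P mB.
have intB : P.-integrable B (EFin \o h).
  exact: integrableS measurableT mB (subsetT B) (represents_integrable PP_P).
have [PB0|PB_neq0] := eqVneq (P B) 0.
  rewrite PB0 mule0 null_set_integral ?abse0//.
  by apply/measurable_EFinP; exact: measurable_funS mh.
rewrite -(fineK (fin_num_measure P B mB)) -(fineK (integrable_fin_num mB intB)).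
rewrite -(represents_restr_charge mB PP_P) /= -EFinM lee_fin.
set p := fine (P B); set I := x (restr_charge P mB).
have p_gt0 : (0 < p)%R.
  by rewrite fine_gt0// lt0e PB_neq0 measure_ge0 /= ltey_eq fin_num_measure.
set c := (delta / (2 * p))%R.
have c_gt0 : (0 < c)%R by rewrite divr_gt0// mulr_gt0.
have cB := caP_cscale_restr_charge mB PP_P (ltW c_gt0).
have := x_near0 _ cB; rewrite x0 subr0 tv_norm_cscale_restr_charge ?(ltW c_gt0)//.
rewrite (ca_linear_cscale cz (caP_restr_charge mB PP_P) cB) -/p -/I.
have delta_neq0 : delta != 0%R by rewrite gt_eqF.
have p_neq0 : p != 0%R by rewrite gt_eqF.
have cpE : (c * p = delta / 2)%R by rewrite /c; field; rewrite p_neq0.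
have cKE : (c * (2 / delta * p) = 1)%R by rewrite /c; field; rewrite p_neq0 delta_neq0.
have cp_lt : (c * p < delta)%R by rewrite cpE; lra.
by move=> /(_ cp_lt); rewrite normrM gtr0_norm//; nra.
Qed.

End ca_representation.

Lemma represents_unique d (T : measurableType d) (R : realType)
    (PP : set (probability T R)) (x : {charge set T -> \bar R} -> R)
    (h h' : T -> R) (P : probability T R) :
  measurable_fun setT h -> represents PP x h ->
  measurable_fun setT h' -> represents PP x h' ->
  PP P -> P [set w | h w != h' w] = 0%E.
Proof.
move=> mh x_h mh' x_h' PP_P.
apply: integral_eq_measure_neq_eq0 => //.
- exact: represents_integrable mh x_h _ PP_P.
- exact: represents_integrable mh' x_h' _ PP_P.
move=> B mB.
by rewrite -(represents_restr_charge mh x_h mB PP_P) (represents_restr_charge mh' x_h' mB PP_P).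
Qed.

Theorem lemma3p17 (d : measure_display) (T : measurableType d) (R : realType)
  (PP : set (probability T R)) (x : {charge set T -> \bar R} -> R) (h : T -> R) :
  convex_family PP -> ca_dual PP x ->
  measurable_fun setT h -> represents PP x h ->
  (forall h' : T -> R, measurable_fun setT h' -> represents PP x h' ->
     exists2 N : set T, polar PP N & forall w, ~ N w -> h w = h' w) /\
  (exists C : R, exists2 N : set T, polar PP N & forall w, ~ N w -> `|h w| <= C).
Proof.
move=> _ [x_linear x_continuous] mh x_h; split=> [h' mh' x_h'|].
  exists [set w | h w != h' w] => [|w /negP/negPn/eqP//].
  split; first exact: measurable_neqr.
  by move=> P PP_P; exact: represents_unique mh x_h mh' x_h' PP_P.
have [[P0 PP_P0]|PP0] := pselect (exists P, PP P); last first.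
  exists 0%R, setT => [|w /(_ I) []].
  by split=> // P PP_P; exfalso; apply: PP0; exists P.
have cz := caP_czero PP_P0.
have [K int_le] := represents_integral_abs_le x_linear mh x_h x_continuous cz.
exists K, [set w | K < `|h w|] => [|w /negP]; last by rewrite -leNgt.
split; first by apply: measurable_ltr => //; exact: measurableT_comp.
move=> P PP_P; apply: integral_abs_le_measure_gt_eq0 => //.
  exact: represents_integrable mh x_h _ PP_P.
by move=> B mB; exact: int_le.
Qed.
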